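(* Let $\mathcal{C}_3=\mathbb{C}\{e_1,e_2,e_3\}$ be the complex Clifford algebra with generators satisfying $e_j^2=-1$ and $e_je_k=-e_ke_j$ ($j\neq k$), of dimension $8$, and let $e_{[3]}=e_1e_2e_3$, so that $e_{[3]}^2=1$. Let $\mathcal{C}_2\subset\mathcal{C}_3$ be the subalgebra with basis $1,e_1,e_2,e_{12}=e_1e_2$. Then every $a\in\mathcal{C}_3$ can be written as $a=a_0+a_1e_{[3]}$ with $a_0,a_1\in\mathcal{C}_2$. Define $\overline{a}=a_0-a_1e_{[3]}$ and $D_a=\mathrm{diag}(aI_2,\overline{a}I_2)$. Let $$P_2=\frac12\begin{pmatrix}1-ie_1 & e_2+ie_{12}\\ -e_2+ie_{12} & 1+ie_1\end{pmatrix}\ (=P_2^{-1}),$$ $$P_3=\frac12\begin{pmatrix}(1+e_{[3]})P_2 & -(1-e_{[3]})P_2\\ (1-e_{[3]})P_2 & (1+e_{[3]})P_2\end{pmatrix},\qquad P_3'=\frac12\begin{pmatrix}P_2^{-1}(1+e_{[3]}) & P_2^{-1}(1-e_{[3]})\\ -P_2^{-1}(1-e_{[3]}) & P_2^{-1}(1+e_{[3]})\end{pmatrix}.$$ Then $P_3$ is invertible with $P_3^{-1}=P_3'$, and $$P_3D_aP_3^{-1}=\begin{pmatrix}\phi_2(a_0)+\phi_2(a_1) & 0\\ 0 & \phi_2(a_0)-\phi_2(a_1)\end{pmatrix},$$ a block diagonal matrix with two $2\times 2$ complex blocks.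
   Context: For $b=b_0+b_1e_1+b_2e_2+b_3e_{12}\in\mathcal{C}_2$ ($b_j\in\mathbb{C}$), $\phi_2(b)=\begin{pmatrix}b_0+b_1i & -(b_2+b_3i)\\ b_2-b_3i & b_0-b_1i\end{pmatrix}\in\mathbb{C}^{2\times 2}$. $i$ is the imaginary unit of $\mathbb{C}$. For an element $c$ and a matrix $M$, $cM$ (resp. $Mc$) denotes the matrix with entries $cM_{jk}$ (resp. $M_{jk}c$). *)

(* The complex Clifford algebra C_3 = C{e1,e2,e3} (e_j^2 = -1,
   e_j e_k = - e_k e_j) is built concretely: an element is the family of its
   coefficients on the blades e_A, A a subset of {e1,e2,e3} (indices 0,1,2 of 'I_3),
   and the product is the standard blade product
     e_A e_B = (-1)^(#{(i,j) : i in A, j in B, j < i} + |A /\ B|) e_(A symdiff B). *)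
From HB Require Import structures.
From mathcomp Require Import all_boot all_order all_algebra.
Set Implicit Arguments. Unset Strict Implicit. Unset Printing Implicit Defensive.
Import Order.TTheory GRing.Theory Num.Theory.
Local Open Scope ring_scope.

Section Clifford3.
Variable C : numClosedFieldType.

Notation idx := {set 'I_3}.
Definition cl3 := {ffun idx -> C}.
HB.instance Definition _ := GRing.Zmodule.copy cl3 {ffun idx -> C}.
Definition clscale (c : C) (x : cl3) : cl3 := [ffun A => c * x A].

Definition i1 : 'I_3 := inord 0.
Definition i2 : 'I_3 := inord 1.
Definition i3 : 'I_3 := inord 2.

Definition symd (A B : idx) : idx := (A :\: B) :|: (B :\: A).

Definition blade_sign (A B : idx) : C :=
  (-1) ^+ (#|[set p : ('I_3 * 'I_3)%type | (p.1 \in A) && (p.2 \in B) && ((p.2 < p.1)%N) ]|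
           + #|A :&: B|).

Definition clmul (x y : cl3) : cl3 :=
  [ffun S => \sum_(A : idx) blade_sign A (symd A S) * x A * y (symd A S)].

Definition clsc (c : C) : cl3 := [ffun A => if A == set0 then c else 0].
Definition blade (A : idx) : cl3 := [ffun B => if B == A then 1 else 0].

Definition e1 : cl3 := blade [set i1].
Definition e2 : cl3 := blade [set i2].
Definition e3 : cl3 := blade [set i3].
Definition e12 : cl3 := blade [set i1; i2].
Definition e123 : cl3 := blade [set i1; i2; i3].

Definition in_C2 (x : cl3) : Prop :=
  forall A : idx, ~~ (A \subset [set i1; i2]) -> x A = 0.

Definition clmxmul m n p (A : 'M[cl3]_(m, n)) (B : 'M[cl3]_(n, p)) : 'M[cl3]_(m, p) :=
  \matrix_(i, j) \sum_k clmul (A i k) (B k j).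
Definition clmx1 n : 'M[cl3]_n := \matrix_(i, j) if i == j then clsc 1 else 0.
Definition clscmx n (c : cl3) : 'M[cl3]_n := \matrix_(i, j) if i == j then c else 0.
Definition cllsc m n (c : cl3) (M : 'M[cl3]_(m, n)) : 'M[cl3]_(m, n) := map_mx (clmul c) M.
Definition clrsc m n (M : 'M[cl3]_(m, n)) (c : cl3) : 'M[cl3]_(m, n) :=
  map_mx (fun x => clmul x c) M.

Definition mx2 (T : Type) (a b c d : T) : 'M[T]_2 :=
  \matrix_(i < 2, j < 2)
    if (i == 0 :> nat) then (if (j == 0 :> nat) then a else b)
    else (if (j == 0 :> nat) then c else d).

Definition half m n (M : 'M[cl3]_(m, n)) : 'M[cl3]_(m, n) := map_mx (clscale 2^-1) M.

Definition P2 : 'M[cl3]_2 :=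
  half (mx2 (clsc 1 - clscale 'i e1) (e2 + clscale 'i e12) (- e2 + clscale 'i e12) (clsc 1 + clscale 'i e1)).

Definition P3 : 'M[cl3]_(2 + 2) :=
  half (block_mx (cllsc (clsc 1 + e123) P2) (- cllsc (clsc 1 - e123) P2)
                 (cllsc (clsc 1 - e123) P2) (cllsc (clsc 1 + e123) P2)).

(* P3' with P2^{-1} = P2 (the theorem also asserts P2 * P2 = 1) *)
Definition P3' : 'M[cl3]_(2 + 2) :=
  half (block_mx (clrsc P2 (clsc 1 + e123)) (clrsc P2 (clsc 1 - e123))
                 (- clrsc P2 (clsc 1 - e123)) (clrsc P2 (clsc 1 + e123))).

Definition Dmat (a abar : cl3) : 'M[cl3]_(2 + 2) :=
  block_mx (clscmx 2 a) 0 0 (clscmx 2 abar).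

Definition phi2 (b : cl3) : 'M[C]_2 :=
  let b0 := b set0 in let b1 := b [set i1] in
  let b2 := b [set i2] in let b3 := b [set i1; i2] in
  mx2 (b0 + b1 * 'i) (- (b2 + b3 * 'i)) (b2 - b3 * 'i) (b0 - b1 * 'i).

End Clifford3.

(* Since e123 is central with e123^2 = 1, e+ = (1 + e123)/2 and e- = (1 - e123)/2
   are central orthogonal idempotents with e+ + e- = 1.  In their terms
   P3 = [[e+ P2, -e- P2], [e- P2, e+ P2]] and P3' is the same matrix with e- replaced
   by -e-, so multiplying out the blocks gives, for scalars a and b,
     P3 diag(a, b) P3' = diag(P2 (e+ a + e- b) P2, P2 (e- a + e+ b) P2),
   and in particular P3 P3' = P3' P3 = diag(P2^2, P2^2).  For D_a one has
   e+ a + e- abar = a0 + a1 e123^2 = a0 + a1 and e- a + e+ abar = a0 - a1, so all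
   that remains is P2^2 = 1 and P2 b P2 = phi2(b) for b in C2: a finite computation
   in the coordinates of C3, which also give the decomposition a = a0 + a1 e123. *)

From Pilot Require Import Defs.
From HB Require Import structures.
From mathcomp Require Import all_boot all_order all_algebra.
From mathcomp Require Import ring.
Set Implicit Arguments. Unset Strict Implicit. Unset Printing Implicit Defensive.
Import GRing.Theory Num.Theory.
Local Open Scope ring_scope.

Section RotBlock.
Variables (R : pzRingType) (n : nat).
Implicit Types (A B X Y : 'M[R]_n).

Lemma mulmxZ_comm (c : R) m p (A : 'M[R]_(m, n)) (B : 'M[R]_(n, p)) :
  (forall x, GRing.comm c x) -> A *m (c *: B) = c *: (A *m B).
Proof.
move=> cC; apply/matrixP => i j; rewrite !mxE mulr_sumr.
by apply: eq_bigr => k _; rewrite mxE mulrA -cC mulrA.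
Qed.

Definition rot_block (u v : R) A : 'M[R]_(n + n) :=
  block_mx (u *: A) (- (v *: A)) (v *: A) (u *: A).

Variables (u v : R).
Hypotheses (uC : forall x, GRing.comm u x) (vC : forall x, GRing.comm v x) (uv0 : u * v = 0).

Lemma rot_block_conj A B X Y :
  rot_block u v A *m block_mx X 0 0 Y *m rot_block u (- v) B =
  block_mx ((u * u) *: (A *m X *m B) + (v * v) *: (A *m Y *m B)) 0
           0 ((v * v) *: (A *m X *m B) + (u * u) *: (A *m Y *m B)).
Proof.
have vu0 : v * u = 0 by rewrite vC.
rewrite !mulmx_block !(mulmx0, mul0mx, addr0, add0r, scaleNr, mulNmx, mulmxN).
rewrite -!scalemxAl !(mulmxZ_comm _ _ uC, mulmxZ_comm _ _ vC) !scalerA uv0 vu0.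
by rewrite !scale0r !(oppr0, opprK, subr0, sub0r, addr0).
Qed.

Lemma rot_block_mul (uv1 : u * u + v * v = 1) A B :
  rot_block u v A *m rot_block u (- v) B = block_mx (A *m B) 0 0 (A *m B).
Proof.
have := rot_block_conj A B 1%:M 1%:M.
by rewrite -scalar_mx_block mulmx1 !mulmx1 -!scalerDl [v * v + _]addrC uv1 !scale1r.
Qed.

Lemma rot_block_conj_scalar (uu : u * u = u) (vv : v * v = v) A B a b :
  rot_block u v A *m block_mx a%:M 0 0 b%:M *m rot_block u (- v) B =
  block_mx (A *m (u * a + v * b)%:M *m B) 0 0 (A *m (v * a + u * b)%:M *m B).
Proof.
rewrite rot_block_conj uu vv !raddfD /= !mulmxDl -!scale_scalar_mx.
by rewrite !(mulmxZ_comm _ _ uC, mulmxZ_comm _ _ vC) -!scalemxAl.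
Qed.

End RotBlock.

Lemma val_i1 : i1 = 0%N :> nat. Proof. by rewrite /i1 inordK. Qed.
Lemma val_i2 : i2 = 1%N :> nat. Proof. by rewrite /i2 inordK. Qed.
Lemma val_i3 : i3 = 2%N :> nat. Proof. by rewrite /i3 inordK. Qed.

Lemma eq_i1i2 : (i1 == i2) = false. Proof. by rewrite -val_eqE /= val_i1 val_i2. Qed.
Lemma eq_i1i3 : (i1 == i3) = false. Proof. by rewrite -val_eqE /= val_i1 val_i3. Qed.
Lemma eq_i2i3 : (i2 == i3) = false. Proof. by rewrite -val_eqE /= val_i2 val_i3. Qed.
Definition eq_i3 :=
  (eqxx, eq_i1i2, eq_i1i3, eq_i2i3, eq_sym i2 i1, eq_sym i3 i1, eq_sym i3 i2).

Lemma ord3_ind (P : 'I_3 -> Prop) : P i1 -> P i2 -> P i3 -> forall x, P x.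
Proof.
move=> p1 p2 p3 [[|[|[|n]]] lt_n3] //.
- by rewrite (_ : Ordinal _ = i1) //; apply: val_inj; rewrite /= val_i1.
- by rewrite (_ : Ordinal _ = i2) //; apply: val_inj; rewrite /= val_i2.
- by rewrite (_ : Ordinal _ = i3) //; apply: val_inj; rewrite /= val_i3.
Qed.

Lemma big_ord3 (R : Type) (idx : R) (op : Monoid.law idx) (F : 'I_3 -> R) :
  \big[op/idx]_(i < 3) F i = op (F i1) (op (F i2) (F i3)).
Proof.
rewrite !big_ord_recl big_ord0 Monoid.mulm1.
by congr (op (F _) (op (F _) (F _))); apply: val_inj; rewrite /= ?val_i1 ?val_i2 ?val_i3.
Qed.

Definition set3 (b1 b2 b3 : bool) : {set 'I_3} :=
  [set x | [|| b1 && (x == i1), b2 && (x == i2) | b3 && (x == i3)]].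

Lemma in_set3_1 b1 b2 b3 : (i1 \in set3 b1 b2 b3) = b1.
Proof. by rewrite inE !eq_i3 !andbT !andbF ?orbF ?orFb. Qed.
Lemma in_set3_2 b1 b2 b3 : (i2 \in set3 b1 b2 b3) = b2.
Proof. by rewrite inE !eq_i3 !andbT !andbF ?orbF ?orFb. Qed.
Lemma in_set3_3 b1 b2 b3 : (i3 \in set3 b1 b2 b3) = b3.
Proof. by rewrite inE !eq_i3 !andbT !andbF ?orbF ?orFb. Qed.
Definition in_set3 := (in_set3_1, in_set3_2, in_set3_3).

Lemma eq_set3 (A B : {set 'I_3}) :
  (A == B) =
  [&& (i1 \in A) == (i1 \in B), (i2 \in A) == (i2 \in B) & (i3 \in A) == (i3 \in B)].
Proof.
apply/eqP/and3P => [-> | [/eqP h1 /eqP h2 /eqP h3]]; first by rewrite !eqxx.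
by apply/setP; apply: ord3_ind.
Qed.

Lemma set3_bits (A : {set 'I_3}) : A = set3 (i1 \in A) (i2 \in A) (i3 \in A).
Proof. by apply/eqP; rewrite eq_set3 !in_set3 !eqxx. Qed.

Lemma in_symd x (A B : {set 'I_3}) : (x \in symd A B) = (x \in A) (+) (x \in B).
Proof. by rewrite !inE; case: (x \in A); case: (x \in B). Qed.

Lemma sum_set3 (R : nmodType) (F : {set 'I_3} -> R) :
  \sum_(A : {set 'I_3}) F A =
  \sum_(b1 : bool) \sum_(b2 : bool) \sum_(b3 : bool) F (set3 b1 b2 b3).
Proof.
rewrite (reindex (fun b : bool * bool * bool => set3 b.1.1 b.1.2 b.2)) /=.
  rewrite -(pair_big xpredT xpredT (fun (b : bool * bool) b3 => F (set3 b.1 b.2 b3))) /=.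
  by rewrite -(pair_big xpredT xpredT (fun b1 b2 => \sum_(b3 : bool) F (set3 b1 b2 b3))).
exists (fun A : {set 'I_3} => (i1 \in A, i2 \in A, i3 \in A)) => [[[b1 b2] b3] | A] _ /=.
  by rewrite !in_set3.
by rewrite -set3_bits.
Qed.

Lemma blade_sign_bits (C : numClosedFieldType) (A B : {set 'I_3}) :
  blade_sign C A B = (-1) ^+ (((i2 \in A) && (i1 \in B)) + ((i3 \in A) && (i1 \in B))
    + ((i3 \in A) && (i2 \in B)) + ((i1 \in A) && (i1 \in B)) + ((i2 \in A) && (i2 \in B))
    + ((i3 \in A) && (i3 \in B)))%N.
Proof.
rewrite /blade_sign; congr (_ ^+ _).
have -> : #|[set p : 'I_3 * 'I_3 | (p.1 \in A) && (p.2 \in B) && (p.2 < p.1)%N]| =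
          (\sum_(i < 3) \sum_(j < 3) ((i \in A) && (j \in B) && (j < i)%N : nat))%N.
  rewrite pair_big /= -sum1_card big_mkcond /=.
  by apply: eq_bigr => p _; rewrite inE; case: (_ && _).
have -> : #|A :&: B| = (\sum_(i < 3) ((i \in A) && (i \in B) : nat))%N.
  rewrite -sum1_card big_mkcond /=.
  by apply: eq_bigr => i _; rewrite inE; case: (_ && _).
rewrite !big_ord3 val_i1 val_i2 val_i3 /=.
by case: (i1 \in A); case: (i2 \in A); case: (i3 \in A);
   case: (i1 \in B); case: (i2 \in B); case: (i3 \in B).
Qed.

Section Coordinates.
Variable C : numClosedFieldType.
Local Notation cl := (cl3 C).

Definition sel8 (b1 b2 b3 : bool) (c0 c1 c2 c3 c12 c13 c23 c123 : C) : C :=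
  if b1 then (if b2 then (if b3 then c123 else c12) else (if b3 then c13 else c1))
  else (if b2 then (if b3 then c23 else c2) else (if b3 then c3 else c0)).

Definition mkcl (c0 c1 c2 c3 c12 c13 c23 c123 : C) : cl :=
  [ffun A : {set 'I_3} => sel8 (i1 \in A) (i2 \in A) (i3 \in A) c0 c1 c2 c3 c12 c13 c23 c123].

Lemma mkcl_ind (P : cl -> Prop) :
  (forall c0 c1 c2 c3 c12 c13 c23 c123, P (mkcl c0 c1 c2 c3 c12 c13 c23 c123)) ->
  forall x, P x.
Proof.
move=> Pmk x.
suff -> : x = mkcl (x (set3 false false false)) (x (set3 true false false))
    (x (set3 false true false)) (x (set3 false false true)) (x (set3 true true false))
    (x (set3 true false true)) (x (set3 false true true)) (x (set3 true true true)) by [].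
apply/ffunP => A; rewrite ffunE {1}(set3_bits A).
by case: (i1 \in A); case: (i2 \in A); case: (i3 \in A).
Qed.

Lemma mkcl_inj x0 x1 x2 x3 x12 x13 x23 x123 y0 y1 y2 y3 y12 y13 y23 y123 :
  mkcl x0 x1 x2 x3 x12 x13 x23 x123 = mkcl y0 y1 y2 y3 y12 y13 y23 y123 ->
  [/\ x0 = y0, x1 = y1, x2 = y2, x3 = y3 &
      [/\ x12 = y12, x13 = y13, x23 = y23 & x123 = y123]].
Proof.
move=> /ffunP eq_xy.
have e b1 b2 b3 : sel8 b1 b2 b3 x0 x1 x2 x3 x12 x13 x23 x123 =
                  sel8 b1 b2 b3 y0 y1 y2 y3 y12 y13 y23 y123.
  by have := eq_xy (set3 b1 b2 b3); rewrite !ffunE !in_set3.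
by split; [exact: (e false false false) | exact: (e true false false)
  | exact: (e false true false) | exact: (e false false true)
  | split; [exact: (e true true false) | exact: (e true false true)
  | exact: (e false true true) | exact: (e true true true)]].
Qed.

Ltac bits_ext := let A := fresh "A" in
  apply/ffunP => A; rewrite !ffunE ?eq_set3 ?inE ?eq_i3;
  by case: (i1 \in A); case: (i2 \in A); case: (i3 \in A).

Lemma mkclD x0 x1 x2 x3 x12 x13 x23 x123 y0 y1 y2 y3 y12 y13 y23 y123 :
  mkcl x0 x1 x2 x3 x12 x13 x23 x123 + mkcl y0 y1 y2 y3 y12 y13 y23 y123 =
  mkcl (x0 + y0) (x1 + y1) (x2 + y2) (x3 + y3)
       (x12 + y12) (x13 + y13) (x23 + y23) (x123 + y123).
Proof. bits_ext. Qed.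

Lemma mkclN x0 x1 x2 x3 x12 x13 x23 x123 :
  - mkcl x0 x1 x2 x3 x12 x13 x23 x123 =
  mkcl (- x0) (- x1) (- x2) (- x3) (- x12) (- x13) (- x23) (- x123).
Proof. bits_ext. Qed.

Lemma mkcl0 : 0 = mkcl 0 0 0 0 0 0 0 0 :> cl.
Proof. bits_ext. Qed.

Lemma clsc_mkcl c : clsc c = mkcl c 0 0 0 0 0 0 0.
Proof. bits_ext. Qed.

Lemma e1_mkcl : e1 C = mkcl 0 1 0 0 0 0 0 0. Proof. bits_ext. Qed.
Lemma e2_mkcl : e2 C = mkcl 0 0 1 0 0 0 0 0. Proof. bits_ext. Qed.
Lemma e12_mkcl : e12 C = mkcl 0 0 0 0 1 0 0 0. Proof. bits_ext. Qed.
Lemma e123_mkcl : e123 C = mkcl 0 0 0 0 0 0 0 1. Proof. bits_ext. Qed.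

Lemma clscale_mkcl c x0 x1 x2 x3 x12 x13 x23 x123 :
  clscale c (mkcl x0 x1 x2 x3 x12 x13 x23 x123) =
  mkcl (c * x0) (c * x1) (c * x2) (c * x3) (c * x12) (c * x13) (c * x23) (c * x123).
Proof. bits_ext. Qed.

Lemma mkclM x0 x1 x2 x3 x12 x13 x23 x123 y0 y1 y2 y3 y12 y13 y23 y123 :
  clmul (mkcl x0 x1 x2 x3 x12 x13 x23 x123) (mkcl y0 y1 y2 y3 y12 y13 y23 y123) =
  mkcl (x0 * y0 - x1 * y1 - x2 * y2 - x3 * y3 - x12 * y12 - x13 * y13 - x23 * y23 + x123 * y123)
  (x0 * y1 + x1 * y0 + x2 * y12 + x3 * y13 - x12 * y2 - x13 * y3 - x23 * y123 - x123 * y23)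
  (x0 * y2 - x1 * y12 + x2 * y0 + x3 * y23 + x12 * y1 + x13 * y123 - x23 * y3 + x123 * y13)
  (x0 * y3 - x1 * y13 - x2 * y23 + x3 * y0 - x12 * y123 + x13 * y1 + x23 * y2 - x123 * y12)
  (x0 * y12 + x1 * y2 - x2 * y1 - x3 * y123 + x12 * y0 + x13 * y23 - x23 * y13 - x123 * y3)
  (x0 * y13 + x1 * y3 + x2 * y123 - x3 * y1 - x12 * y23 + x13 * y0 + x23 * y12 + x123 * y2)
  (x0 * y23 - x1 * y123 + x2 * y3 - x3 * y2 + x12 * y13 - x13 * y12 + x23 * y0 - x123 * y1)
  (x0 * y123 + x1 * y23 - x2 * y13 + x3 * y12 + x12 * y3 - x13 * y2 + x23 * y1 + x123 * y0).
Proof.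
apply/ffunP => S; rewrite /clmul ffunE sum_set3.
under eq_bigr do under eq_bigr do under eq_bigr do
  rewrite blade_sign_bits !ffunE !in_symd !in_set3.
rewrite ffunE !big_bool /=.
by case: (i1 \in S); case: (i2 \in S); case: (i3 \in S); rewrite /=; ring.
Qed.

End Coordinates.

Section CliffordRing.
Variable C : numClosedFieldType.
Local Notation cl := (cl3 C).

Lemma clmulA : associative (@clmul C).
Proof.
elim/mkcl_ind => x0 x1 x2 x3 x12 x13 x23 x123; elim/mkcl_ind => y0 y1 y2 y3 y12 y13 y23 y123.
by elim/mkcl_ind => z0 z1 z2 z3 z12 z13 z23 z123; rewrite !mkclM; congr mkcl; ring.
Qed.

Lemma clmul1x : left_id (clsc 1) (@clmul C).
Proof. by elim/mkcl_ind => *; rewrite clsc_mkcl mkclM; congr mkcl; ring. Qed.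

Lemma clmulx1 : right_id (clsc 1) (@clmul C).
Proof. by elim/mkcl_ind => *; rewrite clsc_mkcl mkclM; congr mkcl; ring. Qed.

Lemma clmulDl : left_distributive (@clmul C) +%R.
Proof.
elim/mkcl_ind => x0 x1 x2 x3 x12 x13 x23 x123; elim/mkcl_ind => y0 y1 y2 y3 y12 y13 y23 y123.
by elim/mkcl_ind => z0 z1 z2 z3 z12 z13 z23 z123; rewrite !(mkclD, mkclM); congr mkcl; ring.
Qed.

Lemma clmulDr : right_distributive (@clmul C) +%R.
Proof.
elim/mkcl_ind => x0 x1 x2 x3 x12 x13 x23 x123; elim/mkcl_ind => y0 y1 y2 y3 y12 y13 y23 y123.
by elim/mkcl_ind => z0 z1 z2 z3 z12 z13 z23 z123; rewrite !(mkclD, mkclM); congr mkcl; ring.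
Qed.

Lemma clsc1_neq0 : clsc 1 != 0 :> cl.
Proof.
by apply/eqP => /ffunP /(_ set0); rewrite !ffunE eqxx; apply/eqP; rewrite oner_eq0.
Qed.

HB.instance Definition _ :=
  GRing.Zmodule_isNzRing.Build cl clmulA clmul1x clmulx1 clmulDl clmulDr clsc1_neq0.

Lemma clmulE (x y : cl) : clmul x y = x * y. Proof. by []. Qed.

Lemma mkcl1 : 1 = mkcl 1 0 0 0 0 0 0 0 :> cl.
Proof. exact: clsc_mkcl. Qed.

End CliffordRing.

Ltac cl_coords C :=
  rewrite ?mulr1n ?mulr0n -?clmulE ?(clsc_mkcl, e1_mkcl, e2_mkcl, e12_mkcl, e123_mkcl,
    clscale_mkcl, mkcl0, mkcl1, mkclD, mkclN, mkclM);
  congr mkcl; field: (mulCii C).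

Section Idempotents.
Variable C : numClosedFieldType.
Local Notation cl := (cl3 C).

Lemma clscaleE c (x : cl) : clscale c x = clsc c * x.
Proof. by elim/mkcl_ind: x => *; cl_coords C. Qed.

Definition e123p : cl := clsc 2^-1 * (clsc 1 + e123 C).
Definition e123m : cl := clsc 2^-1 * (clsc 1 - e123 C).

Lemma e123p_comm x : e123p * x = x * e123p.
Proof. by elim/mkcl_ind: x => *; rewrite /e123p; cl_coords C. Qed.

Lemma e123m_comm x : e123m * x = x * e123m.
Proof. by elim/mkcl_ind: x => *; rewrite /e123m; cl_coords C. Qed.

Lemma e123pMm : e123p * e123m = 0.
Proof. by rewrite /e123p /e123m; cl_coords C. Qed.

Lemma e123p_idem : e123p * e123p = e123p.
Proof. by rewrite /e123p; cl_coords C. Qed.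

Lemma e123m_idem : e123m * e123m = e123m.
Proof. by rewrite /e123m; cl_coords C. Qed.

Lemma e123pDm : e123p + e123m = 1.
Proof. by rewrite /e123p /e123m; cl_coords C. Qed.

Lemma e123pD_conj (a0 a1 : cl) :
  e123p * (a0 + a1 * e123 C) + e123m * (a0 - a1 * e123 C) = a0 + a1.
Proof.
elim/mkcl_ind: a0 => *; elim/mkcl_ind: a1 => *.
by rewrite /e123p /e123m; cl_coords C.
Qed.

Lemma e123mD_conj (a0 a1 : cl) :
  e123m * (a0 + a1 * e123 C) + e123p * (a0 - a1 * e123 C) = a0 - a1.
Proof.
elim/mkcl_ind: a0 => *; elim/mkcl_ind: a1 => *.
by rewrite /e123p /e123m; cl_coords C.
Qed.

End Idempotents.

Section P2.
Variable C : numClosedFieldType.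
Local Notation cl := (cl3 C).

Lemma P2_mul : P2 C *m P2 C = 1%:M.
Proof.
apply/matrixP => i j; rewrite !mxE !big_ord_recl big_ord0 /P2 /Defs.half /mx2 !mxE.
by case: i => [[|[|//]] ?]; case: j => [[|[|//]] ?] /=; cl_coords C.
Qed.

Lemma set3_not_C2 b1 b2 : ~~ (set3 b1 b2 true \subset [set i1; i2]).
Proof. by apply/subsetPn; exists i3; rewrite ?in_set3 // !inE !eq_i3. Qed.

Lemma in_C2P (x : cl) :
  in_C2 x <-> exists c0 c1 c2 c12, x = mkcl c0 c1 c2 0 c12 0 0 0.
Proof.
split=> [|[c0 [c1 [c2 [c12 ->]]]] A sA]; last first.
  have i3A : i3 \in A.
    apply: contraNT sA => i3A; apply/subsetP; apply: ord3_ind; rewrite !inE !eq_i3 ?orbT //.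
    by rewrite (negbTE i3A).
  by rewrite ffunE i3A; case: (i1 \in A); case: (i2 \in A).
elim/mkcl_ind: x => c0 c1 c2 c3 c12 c13 c23 c123 x_C2; exists c0, c1, c2, c12.
have z b1 b2 : sel8 b1 b2 true c0 c1 c2 c3 c12 c13 c23 c123 = 0.
  by have := x_C2 _ (set3_not_C2 b1 b2); rewrite ffunE !in_set3.
by congr mkcl; [exact (z false false) | exact (z true false)
  | exact (z false true) | exact (z true true)].
Qed.

Lemma phi2_mkcl (c0 c1 c2 c3 c12 c13 c23 c123 : C) :
  phi2 (mkcl c0 c1 c2 c3 c12 c13 c23 c123) =
  mx2 (c0 + c1 * 'i) (- (c2 + c12 * 'i)) (c2 - c12 * 'i) (c0 - c1 * 'i).
Proof. by rewrite /phi2 !ffunE !inE !eq_i3. Qed.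

Lemma P2_conj (b : cl) : in_C2 b -> P2 C *m b%:M *m P2 C = map_mx (@clsc C) (phi2 b).
Proof.
move=> /in_C2P [c0 [c1 [c2 [c12 ->]]]]; rewrite phi2_mkcl -mulmxA mul_scalar_mx.
apply/matrixP => i j; rewrite !mxE !big_ord_recl big_ord0 /P2 /Defs.half /mx2 !mxE.
by case: i => [[|[|//]] ?]; case: j => [[|[|//]] ?] /=; cl_coords C.
Qed.

End P2.

Section Decomposition.
Variable C : numClosedFieldType.
Local Notation cl := (cl3 C).

Lemma in_C2D (x y : cl) : in_C2 x -> in_C2 y -> in_C2 (x + y).
Proof. by move=> hx hy A sA; rewrite ffunE hx ?hy ?addr0. Qed.

Lemma in_C2B (x y : cl) : in_C2 x -> in_C2 y -> in_C2 (x - y).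
Proof. by move=> hx hy A sA; rewrite !ffunE hx ?hy ?subr0. Qed.

Lemma phi2D (x y : cl) : phi2 (x + y) = phi2 x + phi2 y.
Proof.
by apply/matrixP => i j; rewrite /phi2 /mx2 !mxE !ffunE; do 2 case: ifP => _; ring.
Qed.

Lemma phi2B (x y : cl) : phi2 (x - y) = phi2 x - phi2 y.
Proof.
by apply/matrixP => i j; rewrite /phi2 /mx2 !mxE !ffunE; do 2 case: ifP => _; ring.
Qed.

Lemma mkcl_C2_e123 (x0 x1 x2 x12 y0 y1 y2 y12 : C) :
  mkcl x0 x1 x2 0 x12 0 0 0 + mkcl y0 y1 y2 0 y12 0 0 0 * e123 C =
  mkcl x0 x1 x2 (- y12) x12 y2 (- y1) y0.
Proof. by cl_coords C. Qed.

Lemma C2_e123_decomp (a : cl) :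
  exists a0 a1, [/\ in_C2 a0, in_C2 a1 & a = a0 + a1 * e123 C].
Proof.
elim/mkcl_ind: a => c0 c1 c2 c3 c12 c13 c23 c123.
exists (mkcl c0 c1 c2 0 c12 0 0 0), (mkcl c123 (- c23) c13 0 (- c3) 0 0 0).
by split; [apply/in_C2P; eauto.. | rewrite mkcl_C2_e123 !opprK].
Qed.

Lemma C2_e123_uniq (a0 a1 b0 b1 : cl) : in_C2 a0 -> in_C2 a1 -> in_C2 b0 -> in_C2 b1 ->
  a0 + a1 * e123 C = b0 + b1 * e123 C -> a0 = b0 /\ a1 = b1.
Proof.
move=> /in_C2P[x0 [x1 [x2 [x12 ->]]]] /in_C2P[x0' [x1' [x2' [x12' ->]]]].
move=> /in_C2P[y0 [y1 [y2 [y12 ->]]]] /in_C2P[y0' [y1' [y2' [y12' ->]]]].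
by rewrite !mkcl_C2_e123 => /mkcl_inj[-> -> -> /oppr_inj-> [-> -> /oppr_inj-> ->]].
Qed.

End Decomposition.

Section Translation.
Variable C : numClosedFieldType.
Local Notation cl := (cl3 C).

Lemma clmxmulE m n p (A : 'M[cl]_(m, n)) (B : 'M[cl]_(n, p)) : clmxmul A B = A *m B.
Proof. by apply/matrixP => i j; rewrite !mxE. Qed.

Lemma clscmxE n (c : cl) : clscmx n c = c%:M.
Proof.
by apply/matrixP => i j; rewrite !mxE; case: (i == j); rewrite ?mulr1n ?mulr0n.
Qed.

Lemma clmx1E n : clmx1 C n = 1%:M.
Proof. exact: clscmxE. Qed.

Lemma halfE m n (M : 'M[cl]_(m, n)) : Defs.half M = clsc 2^-1 *: M.
Proof. by apply/matrixP => i j; rewrite !mxE clscaleE. Qed.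

Lemma cllscE m n (c : cl) (M : 'M[cl]_(m, n)) : cllsc c M = c *: M.
Proof. by apply/matrixP => i j; rewrite !mxE. Qed.

Lemma clrscE m n (c : cl) (M : 'M[cl]_(m, n)) :
  (forall x, c * x = x * c) -> clrsc M c = c *: M.
Proof. by move=> cC; apply/matrixP => i j; rewrite !mxE cC. Qed.

Lemma P3E : P3 C = rot_block (e123p C) (e123m C) (P2 C).
Proof. by rewrite /P3 halfE !cllscE scale_block_mx !scalerN !scalerA. Qed.

Lemma P3'E : P3' C = rot_block (e123p C) (- e123m C) (P2 C).
Proof.
have pC x : (clsc 1 + e123 C) * x = x * (clsc 1 + e123 C).
  by elim/mkcl_ind: x => *; cl_coords C.
have mC x : (clsc 1 - e123 C) * x = x * (clsc 1 - e123 C).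
  by elim/mkcl_ind: x => *; cl_coords C.
rewrite /P3' halfE !(clrscE _ pC) !(clrscE _ mC) scale_block_mx !scalerN !scalerA.
by rewrite /rot_block scaleNr opprK.
Qed.

Lemma DmatE (a b : cl) : Dmat a b = block_mx a%:M 0 0 b%:M.
Proof. by rewrite /Dmat !clscmxE. Qed.

End Translation.

Theorem theorem12 (C : numClosedFieldType) :
  clmxmul (P2 C) (P2 C) = clmx1 C 2 /\
  clmxmul (P3 C) (P3' C) = clmx1 C (2 + 2) /\
  clmxmul (P3' C) (P3 C) = clmx1 C (2 + 2) /\
  (forall a : cl3 C, exists a0 a1 : cl3 C,
     [/\ in_C2 a0, in_C2 a1 & a = a0 + clmul a1 (e123 C)]) /\
  (forall a0 a1 b0 b1 : cl3 C, in_C2 a0 -> in_C2 a1 -> in_C2 b0 -> in_C2 b1 ->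
     a0 + clmul a1 (e123 C) = b0 + clmul b1 (e123 C) -> a0 = b0 /\ a1 = b1) /\
  (forall a a0 a1 : cl3 C, in_C2 a0 -> in_C2 a1 -> a = a0 + clmul a1 (e123 C) ->
     clmxmul (clmxmul (P3 C) (Dmat a (a0 - clmul a1 (e123 C)))) (P3' C) =
     block_mx (map_mx (@clsc C) (phi2 a0 + phi2 a1)) 0
              0 (map_mx (@clsc C) (phi2 a0 - phi2 a1))).
Proof.
have pC := @e123p_comm C; have mC := @e123m_comm C.
have NmC x : GRing.comm (- e123m C) x by rewrite /GRing.comm mulNr mulrN mC.
have pNm : e123p C * - e123m C = 0 by rewrite mulrN e123pMm oppr0.
have sq1 : e123p C * e123p C + e123m C * e123m C = 1.
  by rewrite e123p_idem e123m_idem e123pDm.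
rewrite !clmxmulE !clmx1E P3E P3'E.
split; first exact: P2_mul.
split; first by rewrite rot_block_mul ?e123pMm // P2_mul -scalar_mx_block.
split.
  have sqN : e123p C * e123p C + - e123m C * - e123m C = 1 by rewrite mulrNN.
  by rewrite -{2}[e123m C]opprK rot_block_mul // P2_mul -scalar_mx_block.
split; first exact: C2_e123_decomp.
split; first exact: C2_e123_uniq.
move=> a a0 a1 a0_C2 a1_C2 ->; rewrite DmatE !clmulE.
rewrite !clmxmulE rot_block_conj_scalar ?e123pMm ?e123p_idem ?e123m_idem //.
rewrite e123pD_conj e123mD_conj (P2_conj (in_C2D a0_C2 a1_C2)).
by rewrite (P2_conj (in_C2B a0_C2 a1_C2)) phi2D phi2B.
Qed.
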